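(* Let $t$ be an odd positive integer. Then for every integer $n\ge0$, $$b^{3}_{2,3t}(3n+2)\equiv 0\pmod 6.$$
   Context: For integers $r\ge1$ write $f_r=\prod_{i\ge1}(1-q^{ri})$. For coprime positive integers $\ell,m$ and a positive integer $k$, $b^{k}_{\ell,m}(n)$ denotes the number of $k$-colored partitions of $n$ into parts not divisible by $\ell$ or by $m$, i.e. $\sum_{n\ge0} b^{k}_{\ell,m}(n)q^n=\dfrac{f_\ell^k f_m^k}{f_1^k f_{\ell m}^k}$. Thus $\sum b^3_{2,3t}(n)q^n=\dfrac{f_2^3f_{3t}^3}{f_1^3f_{6t}^3}$. *)

From mathcomp Require Import all_boot.
Set Implicit Arguments. Unset Strict Implicit. Unset Printing Implicit Defensive.

(* A k-colored partition of n is a finite multiset of colored parts (j, c),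
   j >= 1 a part size and c : 'I_k a color, with total size n.  We encode it by
   its multiplicity function f : (part, color) -> multiplicity; parts and
   multiplicities are at most n, so the domain 'I_n.+1 * 'I_k and codomain
   'I_n.+1 lose nothing.
   colored_partitions_avoid k l m n = number of k-colored partitions of n
   into parts divisible neither by l nor by m. *)
Definition colored_partitions_avoid (k l m n : nat) : nat :=
  #|[set f : {ffun 'I_n.+1 * 'I_k -> 'I_n.+1} |
      [forall p : 'I_n.+1 * 'I_k,
         (nat_of_ord (f p) != 0) ==>
           [&& 0 < nat_of_ord p.1, ~~ (l %| p.1) & ~~ (m %| p.1)]]
      && ((\sum_(p : 'I_n.+1 * 'I_k) (nat_of_ord p.1) * (nat_of_ord (f p))) == n)]|.

Definition b (k l m n : nat) : nat := colored_partitions_avoid k l m n.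

From mathcomp Require Import all_boot all_algebra.
From mathcomp Require Import zify ring.
Set Implicit Arguments. Unset Strict Implicit. Unset Printing Implicit Defensive.
Import GRing.Theory Num.Theory.
Local Open Scope ring_scope.

(* Let G be the generating polynomial of b^3_{2,3t} truncated in degree N, so that b(N) is the
   coefficient of q^N in G^3.  Modulo 3, G^3 = G^Frob(q^3) has no coefficients outside the
   multiples of 3.  Modulo 2 and q^(N+1), the congruence f_1^2 = f_2 turns G into C(q^3) f_1, where
   C(q^3) is a product over the odd multiples of 3t, hence G^3 = C^3(q^3) f_1^3.  By Euler's
   pentagonal theorem (in Shanks' finite form) f_1^3 = f_1 f_1(q^2) is, mod 2, the sum of
   q^(w(u) + 2 w(x)) over pairs of integers, with w(u) = u(3u-1)/2.  For i = 2 (mod 3) the pairs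
   with w(u) + 2 w(x) = i are permuted without fixed points by an explicit linear involution, so
   the coefficient of q^i in f_1^3 is even.  Hence 2 and 3 both divide b(3n+2). *)

Section CongruenceModXn.
Variables (F : fieldType) (n : nat).

Definition eqmodX (p q : {poly F}) := 'X^n %| p - q.
Local Notation "p = q %[modX]" := (eqmodX p q).

Lemma eqmodX_refl p : p = p %[modX].
Proof. by rewrite /eqmodX subrr dvdp0. Qed.

Lemma eqmodX_sym p q : p = q %[modX] -> q = p %[modX].
Proof. by rewrite /eqmodX -opprB dvdpNr. Qed.

Lemma eqmodX_trans p q r : p = q %[modX] -> q = r %[modX] -> p = r %[modX].
Proof. by rewrite /eqmodX => pq qr; rewrite -(subrKA q) addrC; apply: dvdp_add. Qed.

Lemma eqmodXD p p' q q' :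
  p = p' %[modX] -> q = q' %[modX] -> p + q = p' + q' %[modX].
Proof. by rewrite /eqmodX opprD addrACA => pp' qq'; apply: dvdp_add. Qed.

Lemma eqmodXN p q : p = q %[modX] -> - p = - q %[modX].
Proof. by rewrite /eqmodX -opprD dvdpNr. Qed.

Lemma eqmodXM p p' q q' :
  p = p' %[modX] -> q = q' %[modX] -> p * q = p' * q' %[modX].
Proof.
rewrite /eqmodX => pp' qq'.
have -> : p * q - p' * q' = p * (q - q') + (p - p') * q' by ring.
by apply: dvdp_add; [apply: dvdp_mull | apply: dvdp_mulr].
Qed.

Lemma eqmodXX p q k : p = q %[modX] -> p ^+ k = q ^+ k %[modX].
Proof.
move=> pq; elim: k => [|k IHk]; first exact: eqmodX_refl.
by rewrite !exprS eqmodXM.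
Qed.

Lemma eqmodX_sum0 (I : Type) (r : seq I) (P : pred I) (f : I -> {poly F}) :
  (forall i, P i -> f i = 0 %[modX]) -> \sum_(i <- r | P i) f i = 0 %[modX].
Proof.
move=> f0; apply: (big_ind (eqmodX ^~ 0)) => //; first exact: eqmodX_refl.
by move=> p q p0 q0; rewrite -(addr0 0); apply: eqmodXD.
Qed.

Lemma eqmodX_prod1 (I : Type) (r : seq I) (P : pred I) (f : I -> {poly F}) :
  (forall i, P i -> f i = 1 %[modX]) -> \prod_(i <- r | P i) f i = 1 %[modX].
Proof.
move=> f1; apply: (big_ind (eqmodX ^~ 1)) => //; first exact: eqmodX_refl.
by move=> p q p1 q1; rewrite -(mulr1 1); apply: eqmodXM.
Qed.

Lemma eqmodX_Xn k : (n <= k)%N -> 'X^k = 0 %[modX].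
Proof. by move=> nk; rewrite /eqmodX subr0 dvdp_exp2l. Qed.

Lemma coef_eqmodX p q i : p = q %[modX] -> (i < n)%N -> p`_i = q`_i.
Proof.
move=> /dvdpP [r pq] i_lt_n; apply/eqP; rewrite -subr_eq0 -coefB pq coefMXn.
by rewrite i_lt_n.
Qed.

Lemma eqmodX_mul2l (p q r : {poly F}) :
  p`_0 != 0 -> p * q = p * r %[modX] -> q = r %[modX].
Proof.
move=> p0; rewrite /eqmodX -mulrBr mulrC Gauss_dvdpl //.
apply: coprimep_expl; rewrite coprimep_sym -[X in coprimep _ X]subr0.
by rewrite -polyC0 coprimep_XsubC rootE horner_coef0.
Qed.

End CongruenceModXn.

Notation "p = q %[modX n ]" := (eqmodX n p q) : ring_scope.

Definition allowed_part (l m j : nat) : bool := [&& 0 < j, ~~ (l %| j) & ~~ (m %| j)]%N.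

Section GeneratingPolynomial.
Variable R : comNzRingType.

Definition geom_poly (n j : nat) : {poly R} := \sum_(i < n) 'X^(j * i).

Lemma geom_polyM_1subX n j : geom_poly n j * (1 - 'X^j) = 1 - 'X^(j * n).
Proof.
rewrite /geom_poly mulr_suml -(big_mkord xpredT (fun i => 'X^(j * i) * (1 - 'X^j))).
rewrite (eq_bigr (fun i => - 'X^(j * i.+1) - - 'X^(j * i))).
  by rewrite telescope_sumr // muln0 expr0 opprK addrC.
by move=> i _; rewrite mulnS exprD; ring.
Qed.

Definition avoid_poly (l m N : nat) : {poly R} :=
  \prod_(j < N.+1) (if allowed_part l m j then geom_poly N.+1 j else 1).

Lemma prod_nat_bool (I : finType) (B : pred I) : (\prod_(i : I) B i = [forall i, B i])%N.
Proof.
have [/forallP allB | /forallPn [i /negbTE Bi]] := boolP [forall i, B i].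
  by rewrite big1 // => i _; rewrite allB.
by rewrite (bigD1 i) //= Bi mul0n.
Qed.

Lemma b_coef_avoid_poly k l m N : (b k l m N)%:R = (avoid_poly l m N ^+ k)`_N.
Proof.
(* Each factor is written as a sum over all multiplicities i <= N, the nonzero ones weighted by
   0 when the part j is forbidden; expanding the product over (part, colour) pairs then ranges
   exactly over the multiplicity functions counted by b. *)
pose term j (i : 'I_N.+1) : {poly R} :=
  ((i != 0 :> nat) ==> allowed_part l m j)%:R *: 'X^(j * i).
have factorE j : (if allowed_part l m j then geom_poly N.+1 j else 1) = \sum_i term j i.
  case: ifP => ok; first by apply: eq_bigr => i _; rewrite /term ok implybT scale1r.
  rewrite big_ord_recl /term /= muln0 scale1r big1 ?addr0 // => i _.
  by rewrite ok scale0r.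
have -> : avoid_poly l m N ^+ k = \prod_(p : 'I_N.+1 * 'I_k) \sum_i term p.1 i.
  rewrite /avoid_poly -prodrXl.
  rewrite -(pair_big xpredT xpredT (fun (j : 'I_N.+1) (_ : 'I_k) => \sum_i term j i)).
  by apply: eq_bigr => j _; rewrite prodr_const card_ord factorE.
rewrite bigA_distr_bigA /= coef_sum /b /colored_partitions_avoid cardsE.
rewrite -sum1_card natr_sum big_mkcond /=; apply: eq_bigr => f _.
rewrite /term scaler_prod prodrXr coefZ coefXn -natr_prod prod_nat_bool -natrM.
by rewrite unfold_in /= eq_sym; case: [forall p, _]; case: (N == _).
Qed.

End GeneratingPolynomial.

Lemma exp_pchar_comp (R : comNzRingType) p (pcharRp : p \in [pchar R]) (q : {poly R}) :
  q ^+ p = map_poly (pFrobenius_aut pcharRp) q \Po 'X^p.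
Proof.
have pchar_nat : [pchar {poly R}].-nat p.
  by rewrite pnatE ?(pcharf_prime pcharRp) // pchar_poly.
elim/poly_ind: q => [|q c IHq].
  by rewrite rmorph0 comp_poly0 expr0n (gtn_eqF (prime_gt0 (pcharf_prime pcharRp))).
rewrite rmorphD rmorphM /= map_polyX map_polyC comp_polyD comp_polyM comp_polyX.
by rewrite comp_polyC -IHq exprDn_pchar // exprMn polyC_exp.
Qed.

Lemma coef_exp_pchar (R : comNzRingType) p (q : {poly R}) i :
  p \in [pchar R] -> ~~ (p %| i)%N -> (q ^+ p)`_i = 0.
Proof.
move=> pcharRp p_ndvd_i; rewrite (exp_pchar_comp pcharRp) coef_comp_poly_Xn.
  by rewrite (negbTE p_ndvd_i).
exact: prime_gt0 (pcharf_prime pcharRp).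
Qed.

Definition pentagonal (z : int) : nat :=
  if z is Posz k then k * k + 'C(k, 2) else `|z| * `|z| + 'C(`|z|.+1, 2).

Lemma pentagonalE z : 2 * (pentagonal z)%:Z = z * (3 * z - 1).
Proof.
case: z => k; rewrite ?NegzE /=.
  by have := mul_bin_diag k 1; rewrite bin1; nia.
by have := mul_bin_diag k.+2 1; rewrite bin1; nia.
Qed.

Lemma abs_le_pentagonal z : (`|z| <= pentagonal z)%N.
Proof. by case: z => k /=; nia. Qed.

Section Shanks.
Variable R : comNzRingType.

Definition euler_poly (n : nat) : {poly R} := \prod_(0 <= i < n) (1 - 'X^(i.+1)).

Definition pentagonal_sum (n : nat) : {poly R} :=
  \sum_(k < n.+1) (-1) ^+ k * 'X^(pentagonal k)
  + \sum_(k < n) (-1) ^+ k.+1 * 'X^(pentagonal (- k.+1%:Z)).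

Definition shanks_term (n k : nat) : {poly R} :=
  (-1) ^+ k * 'X^(n * k + 'C(k.+1, 2)) * \prod_(k <= i < n) (1 - 'X^(i.+1)).

Lemma shanks_term_succ n k :
  (k <= n)%N -> shanks_term n.+1 k = 'X^k * (1 - 'X^(n.+1)) * shanks_term n k.
Proof.
move=> le_kn; rewrite /shanks_term big_nat_recr //= mulSn -addnA exprD.
ring.
Qed.

Lemma shanks_term_next n k : (k < n)%N ->
  shanks_term n k.+1 * (1 - 'X^(k.+1)) = - 'X^(n + k.+1) * shanks_term n k.
Proof.
move=> lt_kn; rewrite /shanks_term (big_ltn lt_kn).
have -> : (n * k.+1 + 'C(k.+2, 2) = n * k + 'C(k.+1, 2) + (n + k.+1))%N.
  by rewrite binS bin1 mulnS; lia.
rewrite exprD exprS; ring.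
Qed.

Lemma shanks_sumS n :
  \sum_(k < n.+2) shanks_term n.+1 k = \sum_(k < n.+1) shanks_term n k
    + (-1) ^+ n.+1 * ('X^(pentagonal n.+1) + 'X^(pentagonal (- n.+1%:Z))).
Proof.
(* The increment of the k-th term is w k - v k, and w k = v k.+1: the increments telescope. *)
pose v k := (1 - 'X^k) * shanks_term n k.
pose w k := - 'X^(n + k.+1) * shanks_term n k.
have w_v k : (k < n)%N -> w k = v k.+1.
  by move=> lt_kn; rewrite /v /w -shanks_term_next // mulrC.
have succ_diff k : (k <= n)%N -> shanks_term n.+1 k = shanks_term n k + (w k - v k).
  move=> le_kn; rewrite shanks_term_succ // /v /w.
  by rewrite (_ : n + k.+1 = k + n.+1)%N ?exprD; [ring | lia].
have telescope : \sum_(k < n.+1) (w k - v k) = w n.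
  rewrite big_ord_recr /= -(big_mkord xpredT (fun k => w k - v k)).
  rewrite (eq_big_nat _ _ (F2 := fun k => v k.+1 - v k)); last first.
    by move=> k /andP [_ lt_kn]; rewrite w_v.
  by rewrite telescope_sumr // /v subrr mul0r subr0 addrC subrK.
rewrite (big_ord_recr n.+1) /=.
rewrite (eq_bigr (fun k : 'I_n.+1 => shanks_term n k + (w k - v k))); last first.
  by move=> k _; rewrite succ_diff // -ltnS.
rewrite big_split /= telescope -addrA; congr (_ + _).
rewrite /w /shanks_term !big_geq //.
rewrite (_ : n.+1 * n.+1 + 'C(n.+1, 2) = n + n.+1 + (n * n + 'C(n.+1, 2)))%N; last by nia.
by rewrite [in RHS]exprD exprS; ring.
Qed.

Lemma shanks n : \sum_(k < n.+1) shanks_term n k = pentagonal_sum n.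
Proof.
elim: n => [|n IHn].
  by rewrite /pentagonal_sum !big_ord1 big_ord0 /shanks_term big_geq // addr0 mulr1.
rewrite shanks_sumS IHn /pentagonal_sum (big_ord_recr n.+1) /=.
rewrite (big_ord_recr n (fun k => (-1) ^+ k.+1 * 'X^(pentagonal (- k.+1%:Z)))).
by rewrite mulrDr addrACA.
Qed.

End Shanks.

Section TruncatedProducts.
Variable F : fieldType.

Lemma one_subXn_eqmodX n k : (n <= k)%N -> (1 - 'X^k : {poly F}) = 1 %[modX n].
Proof.
move=> le_nk; rewrite -[X in _ = X %[modX n]]subr0.
by apply: eqmodXD; [apply: eqmodX_refl | apply/eqmodXN/eqmodX_Xn].
Qed.

Lemma geom_poly_eqmodX n j : (0 < j)%N -> geom_poly F n j * (1 - 'X^j) = 1 %[modX n].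
Proof. by move=> j_gt0; rewrite geom_polyM_1subX one_subXn_eqmodX //; nia. Qed.

Lemma geom_poly_eqmodX_1 n j : (n <= j)%N -> geom_poly F n j = 1 %[modX n].
Proof.
case: n => [|n] le_nj; first by rewrite /eqmodX expr0 dvd1p.
rewrite /geom_poly big_ord_recl muln0 expr0 -[X in _ = X %[modX _]]addr0.
apply: eqmodXD; first exact: eqmodX_refl.
by apply: eqmodX_sum0 => i _; apply: eqmodX_Xn; rewrite lift0; nia.
Qed.

Lemma euler_poly_eqmodX_pentagonal n : euler_poly F n = pentagonal_sum F n %[modX n].
Proof.
rewrite -shanks big_ord_recl -[X in X = _ %[modX n]]addr0.
apply: eqmodXD; first by rewrite /shanks_term muln0 expr0 !mul1r; apply: eqmodX_refl.
apply/eqmodX_sym/eqmodX_sum0 => k _.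
by rewrite /eqmodX subr0 /shanks_term dvdp_mulr // dvdp_mull // dvdp_exp2l // lift0; nia.
Qed.

End TruncatedProducts.

Lemma involution_card_even (T : finType) (A : {set T}) (s : T -> T) :
  {in A, forall x, s x \in A} -> {in A, involutive s} ->
  {in A, forall x, s x != x} -> ~~ odd #|A|.
Proof.
have [n] := ubnP #|A|; elim: n A => // n IHn A ltAn sA sK sx.
have [->|[x Ax]] := set_0Vmem A; first by rewrite cards0.
have sxAx : s x \in A :\ x by rewrite !inE sx // sA.
have cardA : #|A| = (#|A :\ x :\ s x|).+2.
  by rewrite (cardsD1 x A) Ax (cardsD1 (s x) (A :\ x)) sxAx.
have subA : {subset A :\ x :\ s x <= A} by move=> y /setD1P [_ /setD1P []].
rewrite cardA /= negbK; apply: IHn; first by rewrite cardA in ltAn; lia.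
- move=> y yB; have [y_ne_sx y_ne_x yA] : [/\ y != s x, y != x & y \in A].
    by move: yB; rewrite !inE => /and3P.
  rewrite !inE sA // andbT; apply/andP; split.
    by apply: contra y_ne_x => /eqP syx; rewrite -(sK y) // syx sK.
  by apply: contra y_ne_sx => /eqP syx; rewrite -(sK y) // syx.
- by move=> y /subA; apply: sK.
- by move=> y /subA; apply: sx.
Qed.

(* With a = 6u - 1 and b = 6x - 1 this is (a, b) |-> ((a - 4b)/3, (-2a - b)/3), which preserves
   a^2 + 2b^2 = 12 (u(3u-1) + 2x(3x-1)) + 3. *)
Definition pent_flip (v : int * int) : int * int :=
  (((v.1 - 4 * v.2 + 1) %/ 3)%Z, ((- 2 * v.1 - v.2 + 1) %/ 3)%Z).

Section PentagonalPairs.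
Variable i : nat.

Definition pent_rep (v : int * int) : bool :=
  (pentagonal v.1 + 2 * pentagonal v.2 == i)%N.

Lemma pent_repE v :
  pent_rep v = (v.1 * (3 * v.1 - 1) + 2 * (v.2 * (3 * v.2 - 1)) == 2 * i%:Z).
Proof.
have := pentagonalE v.1; have := pentagonalE v.2.
by rewrite /pent_rep; case: eqP; case: eqP; lia.
Qed.

Lemma pent_rep_bound v : pent_rep v -> (`|v.1| <= i)%N && (`|v.2| <= i)%N.
Proof.
have := abs_le_pentagonal v.1; have := abs_le_pentagonal v.2.
by rewrite /pent_rep => ? ? /eqP; lia.
Qed.

Hypothesis i_mod3 : (i %% 3 = 2)%N.

Lemma pent_flip_mul3 v : pent_rep v ->
  3 * (pent_flip v).1 = v.1 - 4 * v.2 + 1 /\ 3 * (pent_flip v).2 = - 2 * v.1 - v.2 + 1.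
Proof.
rewrite pent_repE => /eqP rep.
have [q iE] : exists q : int, i%:Z = 3 * q + 2 by exists (i %/ 3)%N; lia.
by rewrite /pent_flip /=; split; nia.
Qed.

Lemma pent_rep_flip v : pent_rep v -> pent_rep (pent_flip v).
Proof.
move=> rep; have [e1 e2] := pent_flip_mul3 rep.
move: rep; rewrite !pent_repE => /eqP rep; apply/eqP.
case: (pent_flip v) e1 e2 => a c /= e1 e2.
have scaled : 9 * (a * (3 * a - 1) + 2 * (c * (3 * c - 1)))
  = 3 * a * (3 * (3 * a) - 3) + 2 * (3 * c * (3 * (3 * c) - 3)) by ring.
rewrite e1 e2 in scaled; nia.
Qed.

Lemma pent_flipK v : pent_rep v -> pent_flip (pent_flip v) = v.
Proof.
move=> rep; have [e1 e2] := pent_flip_mul3 rep.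
have [f1 f2] := pent_flip_mul3 (pent_rep_flip rep).
by rewrite [LHS]surjective_pairing [RHS]surjective_pairing; congr (_, _); lia.
Qed.

Lemma pent_flip_neq v : pent_rep v -> pent_flip v != v.
Proof.
move=> rep; have [e1 _] := pent_flip_mul3 rep.
by apply/eqP => fixed; rewrite fixed in e1; lia.
Qed.

End PentagonalPairs.

Lemma pchar_poly_F2 : 2 \in [pchar {poly 'F_2}].
Proof. by rewrite pchar_poly pchar_Fp. Qed.

Section PentagonalSumCubeModTwo.
Variable n : nat.

Definition pent_index := ('I_n.+1 + 'I_n)%type.

Definition pent_val (j : pent_index) : int :=
  match j with inl k => k%:Z | inr k => - k.+1%:Z end.

Lemma pent_val_inj : injective pent_val.
Proof.
case=> k [] k' /= e; try by exfalso; lia.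
  by case: e => /val_inj ->.
by move/oppr_inj: e => [/val_inj ->].
Qed.

Lemma pent_val_onto z : (`|z| <= n)%N -> exists j, pent_val j = z.
Proof.
case: z => k le_kn; first by exists (inl (Ordinal (le_kn : k < n.+1)%N)).
by exists (inr (Ordinal (le_kn : k < n)%N)); rewrite /= NegzE.
Qed.

Lemma pentagonal_sum_F2 :
  pentagonal_sum 'F_2 n = \sum_(j : pent_index) 'X^(pentagonal (pent_val j)).
Proof.
by rewrite big_sumType /pentagonal_sum (oppr_pchar2 pchar_poly_F2); congr (_ + _);
  apply: eq_bigr => k _; rewrite expr1n mul1r.
Qed.

Lemma coef_pentagonal_sum_cube i : (i <= n)%N -> (i %% 3 = 2)%N ->
  (pentagonal_sum 'F_2 n ^+ 3)`_i = 0.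
Proof.
move=> le_in i_mod3.
pose vals (jj : pent_index * pent_index) := (pent_val jj.1, pent_val jj.2).
pose A := [set jj | pent_rep i (vals jj)].
have -> : (pentagonal_sum 'F_2 n ^+ 3)`_i = #|A|%:R.
  rewrite exprS -(pFrobenius_autE pchar_poly_F2) pentagonal_sum_F2 rmorph_sum /=.
  rewrite big_distrlr pair_big /= coef_sum -sum1_card natr_sum [RHS]big_mkcond /=.
  apply: eq_bigr => jj _; rewrite pFrobenius_autE -exprM -exprD coefXn inE /pent_rep /=.
  by rewrite [(_ * 2)%N]mulnC eq_sym; case: (_ == _).
apply/eqP; rewrite -(dvdn_pcharf (@pchar_Fp 2 isT)) dvdn2.
have vals_inj : injective vals.
  by move=> [j1 j2] [k1 k2] [/pent_val_inj -> /pent_val_inj ->].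
pose flip jj := odflt jj [pick kk | vals kk == pent_flip (vals jj)].
have vals_flip : {in A, forall jj, vals (flip jj) = pent_flip (vals jj)}.
  move=> jj; rewrite inE => rep; rewrite /flip; case: pickP => [kk /eqP // | none].
  have /andP [le1 le2] := pent_rep_bound (pent_rep_flip i_mod3 rep).
  have [k1 e1] := pent_val_onto (leq_trans le1 le_in).
  have [k2 e2] := pent_val_onto (leq_trans le2 le_in).
  by move: (none (k1, k2)); rewrite /vals /= e1 e2 -surjective_pairing eqxx.
have flipA : {in A, forall jj, flip jj \in A}.
  by move=> jj jjA; move: (jjA); rewrite !inE vals_flip //; apply: pent_rep_flip.
apply: (involution_card_even flipA) => jj jjA.
  apply: vals_inj; rewrite !vals_flip ?flipA // (pent_flipK i_mod3) //.
  by rewrite inE in jjA.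
have rep : pent_rep i (vals jj) by rewrite inE in jjA.
by apply: contra_neq (pent_flip_neq i_mod3 rep) => fixed; rewrite -vals_flip // fixed.
Qed.

End PentagonalSumCubeModTwo.

Lemma big_nat_pairs (T : Type) (idx : T) (op : Monoid.law idx) (g : nat -> T) k :
  \big[op/idx]_(0 <= j < k.*2) g j = \big[op/idx]_(0 <= i < k) op (g i.*2) (g i.*2.+1).
Proof.
elim: k => [|k IHk]; first by rewrite !big_geq.
by rewrite doubleS !big_nat_recr //= IHk Monoid.mulmA.
Qed.

(* The congruence f_1^2 = f_2 (mod 2) in disguise. *)
Lemma euler_poly_odd_F2 n :
  \prod_(0 <= i < n) (1 - 'X^(i.*2.+1)) * euler_poly 'F_2 n = 1 %[modX n].
Proof.
have euler_double :
    euler_poly 'F_2 n.*2 = \prod_(0 <= i < n) (1 - 'X^(i.*2.+1)) * euler_poly 'F_2 n ^+ 2.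
  rewrite /euler_poly big_nat_pairs -prodrXl -big_split /=; apply: eq_bigr => i _.
  rewrite -(pFrobenius_autE pchar_poly_F2) rmorphB rmorph1 /= pFrobenius_autE -exprM.
  by rewrite mulnC mul2n doubleS.
have euler_trunc : euler_poly 'F_2 n.*2 = euler_poly 'F_2 n %[modX n].
  rewrite /euler_poly -addnn (@big_cat_nat _ _ _ n) ?leq_addr //=.
  rewrite -[X in _ = X %[modX n]]mulr1; apply: eqmodXM; first exact: eqmodX_refl.
  rewrite big_nat_cond; apply: eqmodX_prod1 => i /andP [/andP [le_ni _] _].
  exact/one_subXn_eqmodX/leqW.
apply: (@eqmodX_mul2l _ _ (euler_poly 'F_2 n)).
  rewrite /euler_poly coef0_prod big1 ?oner_neq0 // => i _.
  by rewrite coefB coef1 coefXn subr0.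
by rewrite mulr1 mulrCA -expr2 -euler_double.
Qed.

Lemma avoid_poly_eqmodX_odd (F : fieldType) m N :
  avoid_poly F 2 m N = \prod_(0 <= i < N.+1 | allowed_part 2 m i.*2.+1)
                          geom_poly F N.+1 i.*2.+1 %[modX N.+1].
Proof.
pose f j : {poly F} := if allowed_part 2 m j then geom_poly F N.+1 j else 1.
have f_even i : f i.*2 = 1 by rewrite /f /allowed_part -mul2n dvdn_mulr //= andbF.
apply: (@eqmodX_trans _ _ _ (\prod_(0 <= j < N.+1.*2) f j)).
  rewrite /avoid_poly -(big_mkord xpredT f) -addnn.
  rewrite [X in eqmodX _ _ X](@big_cat_nat _ _ _ N.+1) ?leq_addr //=.
  rewrite -[X in eqmodX _ X _]mulr1; apply: eqmodXM; first exact: eqmodX_refl.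
  apply/eqmodX_sym; rewrite big_nat_cond; apply: eqmodX_prod1 => j /andP [/andP [le_j _] _].
  by rewrite /f; case: ifP => _; [exact: geom_poly_eqmodX_1 | exact: eqmodX_refl].
rewrite big_nat_pairs [X in _ = X %[modX _]]big_mkcond.
by under eq_bigr => i _ do rewrite f_even Monoid.mul1m; apply: eqmodX_refl.
Qed.

Lemma avoid_poly_F2_eqmodX m N :
  avoid_poly 'F_2 2 m N =
    \prod_(0 <= i < N.+1 | ~~ allowed_part 2 m i.*2.+1) (1 - 'X^(i.*2.+1))
    * pentagonal_sum 'F_2 N.+1 %[modX N.+1].
Proof.
set allowed := fun i => allowed_part 2 m i.*2.+1.
set G := \prod_(0 <= i < N.+1 | allowed i) geom_poly 'F_2 N.+1 i.*2.+1.
set W := \prod_(0 <= i < N.+1 | allowed i) (1 - 'X^(i.*2.+1)) : {poly 'F_2}.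
set C := \prod_(0 <= i < N.+1 | ~~ allowed i) (1 - 'X^(i.*2.+1)) : {poly 'F_2}.
have GW : G * W = 1 %[modX N.+1].
  by rewrite -big_split; apply: eqmodX_prod1 => i _; apply: geom_poly_eqmodX.
have WC_euler : W * C * euler_poly 'F_2 N.+1 = 1 %[modX N.+1].
  by rewrite /W /C -(bigID allowed) /=; apply: euler_poly_odd_F2.
apply: eqmodX_trans (avoid_poly_eqmodX_odd _ _ _) _.
apply: (@eqmodX_trans _ _ _ (G * (W * C * euler_poly 'F_2 N.+1))).
  by rewrite -[X in X = _ %[modX _]]mulr1; apply/eqmodXM/eqmodX_sym; [apply: eqmodX_refl|].
rewrite 2!mulrA -mulrA -[X in eqmodX _ _ X]mul1r; apply: eqmodXM GW _.
by apply: eqmodXM; [apply: eqmodX_refl | apply: euler_poly_eqmodX_pentagonal].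
Qed.

Lemma forbidden_odd_prod_comp (R : comNzRingType) m n : (3 %| m)%N ->
  \prod_(0 <= i < n | ~~ allowed_part 2 m i.*2.+1) (1 - 'X^(i.*2.+1) : {poly R})
    = (\prod_(0 <= i < n | ~~ allowed_part 2 m i.*2.+1) (1 - 'X^(i.*2.+1 %/ 3))) \Po 'X^3.
Proof.
move=> three_dvd_m; rewrite rmorph_prod; apply: eq_bigr => i forbidden.
rewrite rmorphB rmorph1 /= comp_Xn_poly -exprM mulnC divnK //.
apply: dvdn_trans three_dvd_m _.
by move: forbidden; rewrite /allowed_part dvdn2 /= odd_double /= negbK.
Qed.

Lemma coef_avoid_poly_cube_F2 m N : (3 %| m)%N -> (N %% 3 = 2)%N ->
  (avoid_poly 'F_2 2 m N ^+ 3)`_N = 0.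
Proof.
move=> three_dvd_m N_mod3.
set C : {poly 'F_2} :=
  \prod_(0 <= i < N.+1 | ~~ allowed_part 2 m i.*2.+1) (1 - 'X^(i.*2.+1 %/ 3)).
have cube : avoid_poly 'F_2 2 m N ^+ 3
              = (C ^+ 3 \Po 'X^3) * pentagonal_sum 'F_2 N.+1 ^+ 3 %[modX N.+1].
  rewrite rmorphXn -exprMn /= -forbidden_odd_prod_comp //.
  by apply: eqmodXX; apply: avoid_poly_F2_eqmodX.
rewrite (coef_eqmodX cube) // coefM big1 // => j _.
rewrite coef_comp_poly_Xn //; case: ifP => [three_dvd_j | _]; last by rewrite mul0r.
by rewrite coef_pentagonal_sum_cube ?mulr0 //; have := ltn_ord j; lia.
Qed.

Local Close Scope ring_scope.

Theorem mainTheorem17 (t n : nat) :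
  odd t -> 6 %| b 3 2 (3 * t) (3 * n + 2).
Proof.
move=> _.
have N_mod3 : (3 * n + 2) %% 3 = 2 by lia.
have two_dvd : 2 %| b 3 2 (3 * t) (3 * n + 2).
  rewrite (dvdn_pcharf (@pchar_Fp 2 isT)) b_coef_avoid_poly.
  by rewrite coef_avoid_poly_cube_F2 ?dvdn_mulr.
have three_dvd : 3 %| b 3 2 (3 * t) (3 * n + 2).
  rewrite (dvdn_pcharf (@pchar_Fp 3 isT)) b_coef_avoid_poly.
  by rewrite coef_exp_pchar ?pchar_Fp //; lia.
by rewrite (@Gauss_dvd 2 3) // two_dvd three_dvd.
Qed.
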